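(* Let $H$ be the graph on vertex set $\{0,1,\dots,10\}$ in which $i,j$ are adjacent iff $1\le|i-j|\le3$. Suppose the edges of $H$ are colored red/blue with no red cycle of length $3$, $4$ or $5$, and at least one of the edges $\{0,1\},\{0,2\},\{0,3\}$ is blue. Then there exist $k\in\{1,\dots,9\}$ and a blue path $P_B$ in $H[\{0,\dots,k\}]$ with endpoints $0$ and $k$ such that at least one edge $\{k,k+j\}$ with $j\in\{1,2,3\}$, $k+j\le 10$, is blue, and $|V(P_B)\cap\{1,\dots,k\}|/k\ge 1/3$. As a consequence, for every $n\ge 2$, every red/blue coloring of $P_{3n+5}^3$ with no red cycle contains a blue path on $n$ vertices, so $\hat{R}(\mathcal{C},P_n)\le 9n+O(1)$.
   Context: $P_N^3$ is the graph on vertex set $\{1,\dots,N\}$ in which $i,j$ are adjacent iff $1\le|i-j|\le3$. $\hat{R}(\mathcal{C},P_n)$ is the minimum number of edges of a graph $G$ such that every red/blue coloring of $E(G)$ contains a red cycle or a blue path on $n$ vertices. *)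

From mathcomp Require Import all_boot.
Set Implicit Arguments. Unset Strict Implicit. Unset Printing Implicit Defensive.

Definition p3adj (N : nat) : rel 'I_N :=
  fun i j => (i != j) && (val i <= val j + 3) && (val j <= val i + 3).

(* A red/blue colouring of the edges of a graph on T is a map
   c : {set T} -> bool evaluated on the edge {u,v} = [set u; v];
   true = red, false = blue. *)
Definition red_rel (T : finType) (e : rel T) (c : {set T} -> bool) : rel T :=
  fun u v => e u v && c [set u; v].
Definition blue_rel (T : finType) (e : rel T) (c : {set T} -> bool) : rel T :=
  fun u v => e u v && ~~ c [set u; v].

Definition is_cycle_in (T : finType) (r : rel T) (s : seq T) : bool :=
  [&& 3 <= size s, uniq s & cycle r s].

(* x :: p is a path (on size p + 1 distinct vertices) all of whose edges satisfy r *)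
Definition is_path_in (T : finType) (r : rel T) (x : T) (p : seq T) : bool :=
  uniq (x :: p) && path r x p.

Definition n_edges (T : finType) (e : rel T) : nat :=
  #|[set E : {set T} | [exists u, exists v, e u v && (E == [set u; v])]]|.

(* Part 1 is a finite statement about the 2-colourings of the 27 edges of
   H = P_11^3.  It is proved by a certificate: a binary decision tree that
   branches on the colours of individual edges and whose every leaf either
   exhibits a red cycle of length 3, 4 or 5, records that 01, 02, 03 are all
   red, or exhibits the required blue path.

   Parts 2 and 3 follow by a greedy argument on P_N^3.  Every window
   {k, ..., k + 10} of P_N^3 is a copy of H; the invariant blue_run c k says
   that a blue path ends at k using only vertices <= k and has at least
   (k - 1) / 3 edges, and that k has a blue edge forward.  The finite lemma,
   applied to the window at k, extends the path to some k + k' (k' >= 1)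
   keeping the invariant; iterating until N <= k + 10 gives, for
   N >= 3n + 5, a blue path on n vertices.  Since P_N^3 has at most 3N
   edges, this gives the size-Ramsey bound 9n + 15. *)

From mathcomp Require Import all_boot zify.
From Stdlib Require Import Classical.
Set Implicit Arguments. Unset Strict Implicit. Unset Printing Implicit Defensive.

Local Notation H := (@p3adj 11).

Definition no_short_red_cycle N (c : {set 'I_N} -> bool) :=
  forall s : seq 'I_N, 3 <= size s <= 5 -> ~~ is_cycle_in (red_rel (@p3adj N) c) s.

Definition window_conclusion (c : {set 'I_11} -> bool) :=
  exists k : nat, (1 <= k <= 9) /\
    exists (x : 'I_11) (p : seq 'I_11),
      [/\ val x = 0, val (last x p) = k,
          is_path_in (blue_rel H c) x p,
          all (fun w : 'I_11 => val w <= k) (x :: p) &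
          (exists w : 'I_11, (k < val w <= k + 3) && blue_rel H c (last x p) w) /\
          k <= 3 * count (fun w : 'I_11 => 1 <= val w <= k) (x :: p)].

(* Decision-tree certificates over the vertices of H, given as numbers:
   [Split i j t1 t2] continues with t1 if ij is red and with t2 if blue. *)
Inductive cert :=
  | AllRed
  | RedCycle of seq nat
  | Witness of nat & seq nat
  | Split of nat & nat & cert & cert.

(* The vertex n of H (a transparent coercion, so that cert_ok computes). *)
Definition vtx (n : nat) : 'I_11 :=
  (if n < 11 as b return (n < 11) = b -> 'I_11 then fun h => Ordinal h
   else fun _ => ord0) (erefl _).

Lemma vtxK (v : 'I_11) : vtx (val v) = v.
Proof.
rewrite /vtx; move: (erefl _); case: {2 3}(val v < 11) => h; last by rewrite ltn_ord in h.
exact: val_inj.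
Qed.

(* Partial colourings met along a branch: a list of facts (u, v, colour). *)
Definition colour_fact := ('I_11 * 'I_11 * bool)%type.

Definition known (asg : seq colour_fact) (u v : 'I_11) (b : bool) :=
  ((u, v, b) \in asg) || ((v, u, b) \in asg).

Definition known_rel (asg : seq colour_fact) (b : bool) : rel 'I_11 :=
  fun u v => H u v && known asg u v b.

Definition consistent (c : {set 'I_11} -> bool) (asg : seq colour_fact) :=
  forall u v b, (u, v, b) \in asg -> c [set u; v] = b.

Lemma knownP c asg u v b : consistent c asg -> known asg u v b -> c [set u; v] = b.
Proof. by move=> Hc /orP[] /Hc //; rewrite setUC. Qed.

Definition witness_ok (asg : seq colour_fact) (k : nat) (x : 'I_11) (p : seq 'I_11) :=
  [&& val x == 0, val (last x p) == k, uniq (x :: p), path (known_rel asg false) x p,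
      all (fun z : 'I_11 => val z <= k) (x :: p),
      has (fun w => (k < val w <= k + 3) && known_rel asg false (last x p) w)
        (map vtx (iota 0 11))
    & k <= 3 * count (fun w : 'I_11 => 1 <= val w <= k) (x :: p)].

Fixpoint cert_ok (asg : seq colour_fact) (t : cert) : bool :=
  match t with
  | AllRed => [&& known asg (vtx 0) (vtx 1) true, known asg (vtx 0) (vtx 2) true
                & known asg (vtx 0) (vtx 3) true]
  | RedCycle s => let s' := map vtx s in
      [&& 3 <= size s' <= 5, uniq s' & cycle (known_rel asg true) s']
  | Witness k l => (1 <= k <= 9) &&
      if map vtx l is x :: p then witness_ok asg k x p else false
  | Split i j t1 t2 => cert_ok ((vtx i, vtx j, true) :: asg) t1
                       && cert_ok ((vtx i, vtx j, false) :: asg) t2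
  end.

Definition finite_alternative (c : {set 'I_11} -> bool) :=
  [\/ exists2 s, 3 <= size s <= 5 & is_cycle_in (red_rel H c) s,
      forall u v : 'I_11, val u = 0 -> 1 <= val v <= 3 -> ~~ blue_rel H c u v
    | window_conclusion c].

Lemma sub_known_rel c asg b :
  consistent c asg -> subrel (known_rel asg b) (fun u v => H u v && (c [set u; v] == b)).
Proof. by move=> Hc u v /andP[huv /(knownP Hc) ->]; rewrite huv eqxx. Qed.

Lemma cert_ok_sound c t asg : consistent c asg -> cert_ok asg t -> finite_alternative c.
Proof.
elim: t asg => [|s|k l|i j t1 IH1 t2 IH2] asg Hc /=.
- case/and3P=> /(knownP Hc) r1 /(knownP Hc) r2 /(knownP Hc) r3; apply: Or32.
  move=> u v u0 /andP[v1 v3]; rewrite /blue_rel negb_and negbK; apply/orP; right.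
  rewrite -(vtxK u) -(vtxK v) u0.
  by case: v v1 v3 => -[|[|[|[|m]]]] hv //= _ _; rewrite ?r1 ?r2 ?r3.
- case/and3P=> hs hu hcyc; apply: Or31; exists (map vtx s) => //.
  rewrite /is_cycle_in hu (leq_trans _ (proj1 (andP hs))) //=.
  apply: sub_cycle hcyc => u v /(sub_known_rel Hc) /andP[huv /eqP hr].
  by rewrite /red_rel huv hr.
- case/andP=> hk; case: (map vtx l) => // x p.
  case/and5P=> /eqP x0 /eqP hl hu hp /and3P[ha /hasP[w _ /andP[hw hbw]] hcnt].
  apply: Or33; exists k; split=> //; exists x, p; split=> //.
  + rewrite /is_path_in hu /=; apply: sub_path hp => u v /(sub_known_rel Hc).
    by case/andP=> huv /eqP hb; rewrite /blue_rel huv hb.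
  + split=> //; exists w; move: hbw => /(sub_known_rel Hc) /andP[huv /eqP hb].
    by rewrite hw /blue_rel huv hb.
- case/andP=> h1 h2; case hij: (c [set vtx i; vtx j]).
  + by apply: (IH1 _ _ h1) => u v b; rewrite inE => /orP[/eqP[-> -> ->]|/Hc].
  + by apply: (IH2 _ _ h2) => u v b; rewrite inE => /orP[/eqP[-> -> ->]|/Hc].
Qed.

Definition window_cert : cert :=
  (Split 0 1 (Split 0 2 (Split 1 2 (RedCycle [:: 0; 1; 2]) (Split 0 3 AllRed
  (Split 1 3 (Split 2 3 (RedCycle [:: 0; 1; 3; 2]) (Split 1 4 (Split 2 4
  (RedCycle [:: 0; 1; 4; 2]) (Split 3 4 (RedCycle [:: 1; 3; 4]) (Witness 3
  [:: 0; 3]))) (Split 2 4 (Split 3 4 (RedCycle [:: 0; 1; 3; 4; 2]) (Witness 3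
  [:: 0; 3])) (Split 3 4 (Split 2 5 (Split 3 5 (RedCycle [:: 0; 1; 3; 5; 2])
  (Witness 3 [:: 0; 3])) (Split 3 5 (Split 4 5 (RedCycle [:: 3; 4; 5])
  (Witness 4 [:: 0; 3; 2; 1; 4])) (Witness 3 [:: 0; 3]))) (Witness 3 [:: 0;
  3]))))) (Split 2 3 (Split 1 4 (Split 2 4 (RedCycle [:: 0; 1; 4; 2]) (Split
  3 4 (RedCycle [:: 0; 1; 4; 3; 2]) (Witness 3 [:: 0; 3]))) (Split 2 4 (Split
  3 4 (RedCycle [:: 2; 3; 4]) (Witness 3 [:: 0; 3])) (Split 3 4 (Split 2 5
  (Split 3 5 (RedCycle [:: 2; 3; 5]) (Witness 3 [:: 0; 3])) (Split 3 5 (Split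
  4 5 (RedCycle [:: 3; 4; 5]) (Witness 4 [:: 0; 3; 1; 2; 4])) (Witness 3 [::
  0; 3]))) (Witness 3 [:: 0; 3])))) (Split 1 4 (Split 2 4 (RedCycle [:: 0; 1;
  4; 2]) (Split 3 4 (Split 2 5 (Split 3 5 (Split 4 5 (RedCycle [:: 0; 1; 4;
  5; 2]) (Witness 4 [:: 0; 3; 1; 2; 4])) (Witness 3 [:: 0; 3])) (Split 3 5
  (Split 4 5 (RedCycle [:: 3; 4; 5]) (Witness 4 [:: 0; 3; 1; 2; 4])) (Witness
  3 [:: 0; 3]))) (Witness 3 [:: 0; 3]))) (Split 2 4 (Split 3 4 (Split 2 5
  (Split 3 5 (RedCycle [:: 2; 4; 3; 5]) (Witness 3 [:: 0; 3])) (Split 3 5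
  (Split 4 5 (RedCycle [:: 3; 4; 5]) (Witness 4 [:: 0; 3; 1; 4])) (Witness 3
  [:: 0; 3]))) (Witness 3 [:: 0; 3])) (Split 3 4 (Split 2 5 (Split 3 5 (Split
  4 5 (RedCycle [:: 3; 4; 5]) (Witness 4 [:: 0; 3; 1; 2; 4])) (Witness 3 [::
  0; 3])) (Split 3 5 (Split 4 5 (RedCycle [:: 3; 4; 5]) (Witness 4 [:: 0; 3;
  1; 2; 4])) (Witness 3 [:: 0; 3]))) (Witness 3 [:: 0; 3])))))))) (Split 1 2
  (Split 0 3 (Split 1 3 (RedCycle [:: 0; 1; 3]) (Split 2 3 (RedCycle [:: 0;
  1; 2; 3]) (Witness 2 [:: 0; 2]))) (Split 1 3 (Split 2 3 (RedCycle [:: 1; 2;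
  3]) (Witness 2 [:: 0; 2])) (Split 2 3 (Split 1 4 (Split 2 4 (RedCycle [::
  1; 2; 4]) (Witness 2 [:: 0; 2])) (Split 2 4 (Split 3 4 (RedCycle [:: 2; 3;
  4]) (Witness 3 [:: 0; 3])) (Witness 2 [:: 0; 2]))) (Witness 2 [:: 0; 2]))))
  (Split 0 3 (Split 1 3 (RedCycle [:: 0; 1; 3]) (Split 2 3 (Split 1 4 (Split
  2 4 (RedCycle [:: 0; 1; 4; 2; 3]) (Witness 2 [:: 0; 2])) (Split 2 4 (Split
  3 4 (RedCycle [:: 2; 3; 4]) (Witness 3 [:: 0; 2; 1; 3])) (Witness 2 [:: 0;
  2]))) (Witness 2 [:: 0; 2]))) (Split 1 3 (Split 2 3 (Split 1 4 (Split 2 4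
  (RedCycle [:: 1; 3; 2; 4]) (Witness 2 [:: 0; 2])) (Split 2 4 (Split 3 4
  (RedCycle [:: 2; 3; 4]) (Witness 3 [:: 0; 3])) (Witness 2 [:: 0; 2])))
  (Witness 2 [:: 0; 2])) (Split 2 3 (Split 1 4 (Split 2 4 (Split 3 4
  (RedCycle [:: 2; 3; 4]) (Witness 3 [:: 0; 2; 1; 3])) (Witness 2 [:: 0; 2]))
  (Split 2 4 (Split 3 4 (RedCycle [:: 2; 3; 4]) (Witness 3 [:: 0; 2; 1; 3]))
  (Witness 2 [:: 0; 2]))) (Witness 2 [:: 0; 2])))))) (Split 0 2 (Split 1 2
  (Split 0 3 (Split 1 3 (RedCycle [:: 0; 2; 1; 3]) (Witness 1 [:: 0; 1]))
  (Split 1 3 (Split 2 3 (RedCycle [:: 1; 2; 3]) (Split 1 4 (Split 2 4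
  (RedCycle [:: 1; 2; 4]) (Split 3 4 (RedCycle [:: 1; 3; 4]) (Witness 3 [::
  0; 3]))) (Witness 1 [:: 0; 1]))) (Witness 1 [:: 0; 1]))) (Witness 1 [:: 0;
  1])) (Split 1 2 (Split 0 3 (Split 1 3 (Split 2 3 (RedCycle [:: 1; 2; 3])
  (Witness 2 [:: 0; 2])) (Witness 1 [:: 0; 1])) (Split 1 3 (Split 2 3
  (RedCycle [:: 1; 2; 3]) (Witness 2 [:: 0; 2])) (Witness 1 [:: 0; 1])))
  (Witness 1 [:: 0; 1])))).

Lemma window_cert_ok : cert_ok [::] window_cert.
Proof. by vm_compute. Qed.

Lemma finite_lemma (c : {set 'I_11} -> bool) : no_short_red_cycle c ->
  (exists u v : 'I_11, [/\ val u = 0, 1 <= val v <= 3 & blue_rel H c u v]) ->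
  window_conclusion c.
Proof.
move=> noc [u [v [u0 v13 huv]]].
have consistent0 : consistent c [::] by [].
case: (cert_ok_sound consistent0 window_cert_ok) => [[s hs hcyc]|/(_ u v u0 v13)|//].
- by move: (noc s hs); rewrite hcyc.
- by rewrite huv.
Qed.

Lemma p3adj_sym N : symmetric (@p3adj N).
Proof. by move=> u v; rewrite /p3adj eq_sym andbAC. Qed.

Lemma p3adj_irr N : irreflexive (@p3adj N).
Proof. by move=> u; rewrite /p3adj eqxx. Qed.

Lemma is_path_in_cat (T : finType) (r : rel T) x p q :
  is_path_in r x p -> is_path_in r (last x p) q ->
  {in q, forall y, y \notin x :: p} -> is_path_in r x (p ++ q).
Proof.
case/andP=> up pp /andP[/= /andP[_ uq] pq] fresh.
rewrite /is_path_in -cat_cons cat_uniq up uq cat_path pp pq !andbT.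
by apply/hasPn => y /fresh.
Qed.

Lemma is_path_in_take (T : finType) (r : rel T) x p m :
  is_path_in r x p -> is_path_in r x (take m p).
Proof.
case/andP=> up pp; rewrite /is_path_in take_path // andbT.
exact: (take_uniq m.+1 up).
Qed.

Section Window.
Variables (N k : nat).
Hypothesis room : k + 10 < N.

(* The window {k, ..., k + 10} of P_N^3 is a copy of H: v is placed at k + v. *)
Lemma shift_subproof (v : 'I_11) : v + k < N.
Proof. by have := ltn_ord v; lia. Qed.

Definition shift (v : 'I_11) : 'I_N := Ordinal (shift_subproof v).

Lemma shift_inj : injective shift.
Proof. by move=> u v /(congr1 val) /= /addIn /val_inj. Qed.

Lemma shift_adj u v : p3adj (shift u) (shift v) = H u v.
Proof.
rewrite /p3adj (inj_eq shift_inj) /=.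
by rewrite [v + k + 3]addnAC [u + k + 3]addnAC !leq_add2r.
Qed.

Variable c : {set 'I_N} -> bool.

Definition window_colouring : {set 'I_11} -> bool := fun S => c (shift @: S).

Lemma window_red u v :
  red_rel H window_colouring u v = red_rel (@p3adj N) c (shift u) (shift v).
Proof. by rewrite /red_rel /window_colouring shift_adj imsetU1 imset_set1. Qed.

Lemma window_blue u v :
  blue_rel H window_colouring u v = blue_rel (@p3adj N) c (shift u) (shift v).
Proof. by rewrite /blue_rel /window_colouring shift_adj imsetU1 imset_set1. Qed.

Lemma window_no_short_red_cycle :
  no_short_red_cycle c -> no_short_red_cycle window_colouring.
Proof.
move=> noc s hs; apply/negP => /and3P[s3 us cs].
move: (noc (map shift s)); rewrite size_map => /(_ hs) /negP; apply.
rewrite /is_cycle_in size_map s3 (map_inj_uniq shift_inj) us cycle_map.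
by apply: sub_cycle cs => u v; rewrite window_red.
Qed.

Lemma window_blue_path x p :
  is_path_in (blue_rel H window_colouring) x p ->
  is_path_in (blue_rel (@p3adj N) c) (shift x) (map shift p).
Proof.
case/andP=> up pp; rewrite /is_path_in -map_cons (map_inj_uniq shift_inj) up.
by rewrite path_map; apply: sub_path pp => u v; rewrite window_blue.
Qed.

End Window.

Definition blue_run N (c : {set 'I_N} -> bool) (k : nat) :=
  exists (x : 'I_N) (p : seq 'I_N) (w : 'I_N),
    [/\ is_path_in (blue_rel (@p3adj N) c) x p, val (last x p) = k,
        all (fun z : 'I_N => val z <= k) (x :: p), k <= 3 * size p + 1
      & (k < val w <= k + 3) && blue_rel (@p3adj N) c (last x p) w].

(* Start: either 0 has a blue edge forward (level 0), or 01, 02 are red and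
   then 12 is blue, since 012 is not a red triangle (level 1). *)
Lemma blue_run_start N (c : {set 'I_N} -> bool) :
  3 < N -> no_short_red_cycle c -> exists k, blue_run c k.
Proof.
move=> N3 noc.
have h0 : 0 < N by lia.
have h1 : 1 < N by lia.
have h2 : 2 < N by lia.
pose v0 : 'I_N := Ordinal h0; pose v1 : 'I_N := Ordinal h1; pose v2 : 'I_N := Ordinal h2.
have [/existsP[w /andP[hw bw]]|no_blue] :=
  boolP [exists w : 'I_N, (0 < val w <= 3) && blue_rel (@p3adj N) c v0 w].
  by exists 0, v0, [::], w; split=> //=; rewrite hw bw.
have red0 (w : 'I_N) : 0 < val w <= 3 -> c [set v0; w].
  move=> hw; have adj : p3adj v0 w.
    by rewrite /p3adj -val_eqE /= eq_sym -lt0n add0n; case/andP: hw => -> ->.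
  by move/existsPn: no_blue => /(_ w); rewrite hw /blue_rel adj negbK.
have blue12 : ~~ c [set v1; v2].
  apply/negP => r12; move: (noc [:: v0; v1; v2] isT).
  by rewrite /is_cycle_in /= /red_rel /= r12 [[set v2; v0]]setUC !red0.
by exists 1, v1, [::], v2; rewrite /blue_rel blue12.
Qed.

(* One greedy step: the window starting at k satisfies the hypotheses of the
   finite lemma, whose blue path is appended to the current one. *)
Lemma blue_run_extend N (c : {set 'I_N} -> bool) k :
  no_short_red_cycle c -> k + 10 < N -> blue_run c k -> exists2 k', k < k' & blue_run c k'.
Proof.
move=> noc room [x [p [w [bp lastp below len /andP[hw bw]]]]].
rewrite /= in lastp hw.
pose sh := shift room.
have sh0 : sh ord0 = last x p by apply: val_inj; rewrite /= lastp.
have start : exists u v : 'I_11,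
    [/\ val u = 0, 1 <= val v <= 3 & blue_rel H (window_colouring room c) u v].
  have hv : w - k < 11 by lia.
  have shv : sh (Ordinal hv) = w by apply: val_inj => /=; lia.
  exists ord0, (Ordinal hv); split=> //; last by rewrite window_blue -/sh shv sh0.
  rewrite /=; lia.
have [k' [k'19 [x' [p' [/= x'0 lastp' bp' below' [[w' /andP[hw' bw']] len']]]]]] :=
  finite_lemma (window_no_short_red_cycle room noc) start.
have x'E : x' = ord0 by apply: val_inj.
subst x'.
move: lastp' hw' below' len'; rewrite /= => lastp' hw' below' len'.
exists (k + k'); first lia.
exists x, (p ++ map sh p'), (sh w').
have last_new : last x (p ++ map sh p') = sh (last ord0 p') by rewrite last_cat -sh0 last_map.
split.
- apply: (is_path_in_cat bp); first by rewrite -sh0; exact: window_blue_path.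
  move=> _ /mapP[z zp' ->]; apply/negP => /(allP below) /=.
  have : z != ord0 by apply: contraTneq zp' => ->; case/andP: bp' => /andP[].
  rewrite -val_eqE /=; lia.
- by rewrite last_new /= lastp' addnC.
- rewrite -cat_cons all_cat; apply/andP; split.
    by apply: sub_all below => z /=; lia.
  rewrite all_map; apply/allP => z zp' /=.
  have /= := allP below' z zp'; lia.
- rewrite size_cat size_map; have := count_size (fun w : 'I_11 => 1 <= w <= k') p'.
  lia.
- rewrite last_new -window_blue bw' andbT /=; lia.
Qed.

Lemma blue_run_far N (c : {set 'I_N} -> bool) :
  3 < N -> no_short_red_cycle c -> exists2 k, N <= k + 10 & blue_run c k.
Proof.
move=> N3 noc; have [k0 run0] := blue_run_start N3 noc.
suff far m : forall k, N - k <= m -> blue_run c k -> exists2 k', N <= k' + 10 & blue_run c k'.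
  exact: (far _ k0 (leqnn _) run0).
elim: m => [|m IH] k km run; first by exists k => //; lia.
have [far_k|room] := leqP N (k + 10); first by exists k.
have [k' kk' run'] := blue_run_extend noc room run.
by apply: (IH k') => //; lia.
Qed.

(* A run at level k >= N - 10 >= 3n - 5, extended by its last blue edge,
   has at least n vertices. *)
Lemma blue_run_long_path N (c : {set 'I_N} -> bool) n k :
  0 < n -> 3 * n + 5 <= N -> N <= k + 10 -> blue_run c k ->
  exists (x : 'I_N) (p : seq 'I_N), size p + 1 = n /\ is_path_in (blue_rel (@p3adj N) c) x p.
Proof.
move=> n0 nN kN [x [p [w [bp lastp below len /andP[hw bw]]]]].
rewrite /= in lastp hw.
have bpw : is_path_in (blue_rel (@p3adj N) c) x (rcons p w).
  rewrite -cats1; apply: (is_path_in_cat bp) => [|_ /[!inE] /eqP->].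
    by rewrite /is_path_in /= bw inE andbT -val_eqE /=; lia.
  by apply/negP => /(allP below) /=; lia.
exists x, (take n.-1 (rcons p w)); split; last exact: is_path_in_take.
rewrite size_takel ?size_rcons; lia.
Qed.

Theorem blue_path_in_P3 N n (c : {set 'I_N} -> bool) :
  0 < n -> 3 * n + 5 <= N -> no_short_red_cycle c ->
  exists (x : 'I_N) (p : seq 'I_N), size p + 1 = n /\ is_path_in (blue_rel (@p3adj N) c) x p.
Proof.
move=> n0 nN noc; have [|k kN run] := blue_run_far _ noc; first lia.
exact: blue_run_long_path n0 nN kN run.
Qed.

(* Every edge of P_{M+1}^3 is {u, u + d + 1} for some vertex u and d < 3,
   so the graph has at most 3 (M + 1) edges. *)
Definition forward_edge M (q : 'I_M.+1 * 'I_3) : {set 'I_M.+1} :=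
  [set q.1; inord (q.1 + q.2 + 1)].

Lemma forward_edgeP M (u v : 'I_M.+1) :
  u < v <= u + 3 -> [set u; v] \in @forward_edge M @: setT.
Proof.
move=> uv; have d3 : v - u - 1 < 3 by lia.
apply/imsetP; exists (u, Ordinal d3) => //=; congr [set _; _].
by apply: val_inj; rewrite /= inordK; have := ltn_ord v; lia.
Qed.

Lemma n_edges_p3adj M : n_edges (@p3adj M.+1) <= 3 * M.+1.
Proof.
have -> : 3 * M.+1 = #|[set: 'I_M.+1 * 'I_3]| by rewrite cardsT card_prod !card_ord mulnC.
apply: leq_trans (leq_imset_card (@forward_edge M) _); apply: subset_leq_card; apply/subsetP => _ /[!inE] /existsP[u /existsP[v /andP[uv /eqP->]]].
move: uv; rewrite /p3adj -val_eqE /= => /andP[/andP[uv vu3] uv3].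
case: (ltngtP u v) => [lt|gt|eq]; last by rewrite eq eqxx in uv.
- by apply: forward_edgeP; lia.
- by rewrite setUC; apply: forward_edgeP; lia.
Qed.

Theorem size_ramsey_cycle_path n : 0 < n ->
  exists (T : finType) (e : rel T),
    [/\ symmetric e, irreflexive e, n_edges e <= 9 * n + 15 &
        forall c : {set T} -> bool,
          (exists s : seq T, is_cycle_in (red_rel e c) s) \/
          (exists (x : T) (p : seq T), size p + 1 = n /\ is_path_in (blue_rel e c) x p)].
Proof.
move=> n0; exists 'I_(3 * n + 4).+1, (@p3adj _); split.
- exact: p3adj_sym.
- exact: p3adj_irr.
- by apply: leq_trans (n_edges_p3adj _) _; lia.
move=> c; have [red_cycle|no_red_cycle] := classic (exists s, is_cycle_in (red_rel (@p3adj _) c) s).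
  by left.
right; apply: blue_path_in_P3 n0 _ _; first lia.
by move=> s _; apply/negP => cyc; apply: no_red_cycle; exists s.
Qed.

Theorem mainTheorem7 :
  (* the finite lemma on H = P_11^3 with vertices 0..10 *)
  (forall c : {set 'I_11} -> bool,
     (forall s : seq 'I_11,
        3 <= size s <= 5 -> ~~ is_cycle_in (red_rel (@p3adj 11) c) s) ->
     (exists u v : 'I_11, [/\ val u = 0, 1 <= val v <= 3 &
                            blue_rel (@p3adj 11) c u v]) ->
     exists k : nat, (1 <= k <= 9) /\
       exists (x : 'I_11) (p : seq 'I_11),
         [/\ val x = 0, val (last x p) = k,
             is_path_in (blue_rel (@p3adj 11) c) x p,
             all (fun w : 'I_11 => val w <= k) (x :: p) &
             (exists w : 'I_11, (k < val w <= k + 3) &&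
                                blue_rel (@p3adj 11) c (last x p) w) /\
             k <= 3 * count (fun w : 'I_11 => 1 <= val w <= k) (x :: p)])
  /\
  (* consequence: colourings of P_{3n+5}^3 *)
  (forall n : nat, 2 <= n ->
     forall c : {set 'I_(3 * n + 5)} -> bool,
       (forall s : seq 'I_(3 * n + 5), ~~ is_cycle_in (red_rel (@p3adj _) c) s) ->
       exists (x : 'I_(3 * n + 5)) (p : seq 'I_(3 * n + 5)),
         size p + 1 = n /\ is_path_in (blue_rel (@p3adj _) c) x p)
  /\
  (* consequence: size-Ramsey bound  \hat R(C, P_n) <= 9n + O(1) *)
  (exists C : nat, forall n : nat, 2 <= n ->
     exists (T : finType) (e : rel T),
       [/\ symmetric e, irreflexive e, n_edges e <= 9 * n + C &
           forall c : {set T} -> bool,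
             (exists s : seq T, is_cycle_in (red_rel e c) s) \/
             (exists (x : T) (p : seq T),
                 size p + 1 = n /\ is_path_in (blue_rel e c) x p)]).
Proof.
split; first exact: finite_lemma.
split; last by exists 15 => n n2; apply: size_ramsey_cycle_path; lia.
move=> n n2 c no_red_cycle.
by apply: blue_path_in_P3 (leqnn _) _; [lia | move=> s _; apply: no_red_cycle].
Qed.
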